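(* Let $M$ be a random variable with values in $[-1,1]$ with $\mu_1(M)=\mathbb E M>0$, and let $\mu_2(M)=\mathbb E M^2$ and $\mathcal C_M=1-\mu_1(M)^2/\mu_2(M)$. Then there exists a random variable $\widetilde M$ with values in $[-1,1]$ such that $\mu_1(\widetilde M)=\mu_1(M)$, $\mu_2(\widetilde M)=\mu_2(M)$ and $\mathcal C_{\widetilde M}=\mathcal C_M=\Pr(\widetilde M\le 0)$, if and only if $0<\mu_2(M)\le\mu_1(M)$.
   Context: For a random variable $N$ with $\mathbb E N^2>0$, $\mathcal C_N=1-(\mathbb E N)^2/\mathbb E N^2$. *)

(* A real random variable M with values in [-1,1] is represented by its law,
   i.e. by its cumulative distribution function F(x) = P(M <= x).
   Such F are exactly the nondecreasing, right-continuous functions with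
   F = 0 on (-oo,-1) and F = 1 on [1,+oo).  Expectations E g(M) of continuous
   g are Riemann--Stieltjes integrals  int_{[-2,1]} g dF  (the left end -2 < -1
   makes a possible atom at -1 counted). *)
From Stdlib Require Import Reals Lra.
Open Scope R_scope.

Definition cdf_pm1 (F : R -> R) : Prop :=
  (forall x y, x <= y -> F x <= F y) /\
  (forall x, x < -1 -> F x = 0) /\
  (forall x, 1 <= x -> F x = 1) /\
  (forall x eps, 0 < eps -> exists delta, 0 < delta /\
      forall y, x <= y < x + delta -> F y - F x < eps).

Fixpoint rs_sum (F g : R -> R) (x t : nat -> R) (n : nat) : R :=
  match n with
  | O => 0
  | S k => rs_sum F g x t k + g (t k) * (F (x (S k)) - F (x k))
  end.

Definition RS_integral (F g : R -> R) (a b I : R) : Prop :=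
  forall eps, 0 < eps -> exists delta, 0 < delta /\
    forall (n : nat) (x t : nat -> R),
      x O = a -> x n = b ->
      (forall i, (i < n)%nat -> x i < x (S i) /\ x (S i) - x i < delta) ->
      (forall i, (i < n)%nat -> x i <= t i <= x (S i)) ->
      Rabs (rs_sum F g x t n - I) < eps.

Definition expect (F g : R -> R) (m : R) : Prop := RS_integral F g (-2) 1 m.

Definition mu1_is (F : R -> R) (m1 : R) : Prop := expect F (fun x => x) m1.
Definition mu2_is (F : R -> R) (m2 : R) : Prop := expect F (fun x => x ^ 2) m2.

Definition Ccoef (m1 m2 : R) : R := 1 - m1 ^ 2 / m2.

Definition prob_le (F : R -> R) (c : R) : R := F c.

From Stdlib Require Import Reals Lra Lia.
Open Scope R_scope.

(* Since y <= [y > 0] on [-1,1], E M <= Pr(M > 0) = 1 - Pr(M <= 0).  If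
   Pr(M~ <= 0) = C = 1 - mu1^2/mu2 this reads mu1 <= mu1^2/mu2, i.e. mu2 <= mu1.
   Conversely mu1^2 <= mu2 (the variance is nonnegative), so p := C lies in
   [0,1]; when mu2 <= mu1 also c := mu2/mu1 lies in (0,1], and the variable
   that equals 0 with probability p and c otherwise has mean (1-p) c = mu1,
   second moment (1-p) c^2 = mu2 and Pr(M~ <= 0) = p. *)

Definition nondecreasing (F : R -> R) : Prop := forall x y, x <= y -> F x <= F y.

Definition partition (a b : R) (n : nat) (x : nat -> R) : Prop :=
  x O = a /\ x n = b /\ forall i, (i < n)%nat -> x i < x (S i).

Lemma rs_sum_const (F : R -> R) (c : R) x t n :
  rs_sum F (fun _ => c) x t n = c * (F (x n) - F (x O)).
Proof. induction n as [|n IH]; cbn [rs_sum]; [ring | rewrite IH; ring]. Qed.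

Lemma rs_sum_linear_integrand (F g h k : R -> R) (p q : R) x t n :
  (forall y, k y = p * g y + q * h y) ->
  rs_sum F k x t n = p * rs_sum F g x t n + q * rs_sum F h x t n.
Proof.
  intros Hk; induction n as [|n IH]; cbn [rs_sum]; [ring | rewrite IH, Hk; ring].
Qed.

Lemma rs_sum_linear_cdf (F1 F2 g : R -> R) (p q : R) x t n :
  rs_sum (fun y => p * F1 y + q * F2 y) g x t n =
  p * rs_sum F1 g x t n + q * rs_sum F2 g x t n.
Proof. induction n as [|n IH]; cbn [rs_sum]; [ring | rewrite IH; ring]. Qed.

Lemma rs_sum_nonneg (F g : R -> R) x t n :
  nondecreasing F ->
  (forall i, (i < n)%nat -> x i <= x (S i) /\ 0 <= g (t i)) ->
  0 <= rs_sum F g x t n.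
Proof.
  intros HF Hx; induction n as [|n IH]; cbn [rs_sum]; [lra |].
  destruct (Hx n (Nat.lt_succ_diag_r n)) as [Hxn Hgn].
  assert (0 <= rs_sum F g x t n) by (apply IH; auto).
  assert (F (x n) <= F (x (S n))) by (apply HF; exact Hxn).
  nra.
Qed.

(* Left-endpoint sums of the identity are dominated by the increments of
   F (max 0 _), i.e. by the sums of the integrand [y > 0]. *)
Lemma rs_sum_id_left_le (F : R -> R) x n :
  nondecreasing F ->
  (forall i, (i < n)%nat -> x i < x (S i)) -> x n <= 1 ->
  rs_sum F (fun y => y) x x n <= F (Rmax 0 (x n)) - F (Rmax 0 (x O)).
Proof.
  intros HF; induction n as [|n IH]; intros Hx Hn1; cbn [rs_sum]; [lra |].
  assert (Hxn : x n < x (S n)) by (apply Hx; lia).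
  assert (IHn : rs_sum F (fun y => y) x x n <= F (Rmax 0 (x n)) - F (Rmax 0 (x O)))
    by (apply IH; [intros i Hi; apply Hx; lia | lra]).
  assert (HFn : F (x n) <= F (x (S n))) by (apply HF; lra).
  destruct (Rle_or_lt (x n) 0) as [Hneg | Hpos].
  - rewrite (Rmax_left 0 (x n)) in IHn by lra.
    assert (F 0 <= F (Rmax 0 (x (S n)))) by (apply HF, Rmax_l).
    nra.
  - rewrite (Rmax_right 0 (x n)) in IHn by lra.
    rewrite (Rmax_right 0 (x (S n))) by lra.
    nra.
Qed.

Lemma Rabs_lin_comb_lt (p q u v e : R) :
  Rabs u < e -> Rabs v < e -> Rabs (p * u + q * v) < (Rabs p + Rabs q + 1) * e.
Proof.
  intros Hu Hv.
  pose proof (Rabs_triang (p * u) (q * v)) as Htri.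
  rewrite !Rabs_mult in Htri.
  pose proof (Rabs_pos p); pose proof (Rabs_pos q); pose proof (Rabs_pos u).
  nra.
Qed.

Lemma RS_integral_combine (F F1 F2 g g1 g2 : R -> R) (a b I J p q : R) :
  (forall n x t, rs_sum F g x t n = p * rs_sum F1 g1 x t n + q * rs_sum F2 g2 x t n) ->
  RS_integral F1 g1 a b I -> RS_integral F2 g2 a b J ->
  RS_integral F g a b (p * I + q * J).
Proof.
  intros Hsum HI HJ eps Heps.
  assert (Hk : 0 < Rabs p + Rabs q + 1) by (pose proof (Rabs_pos p); pose proof (Rabs_pos q); lra).
  set (e := eps / (Rabs p + Rabs q + 1)).
  assert (He : 0 < e) by (apply Rdiv_lt_0_compat; lra).
  destruct (HI e He) as [d1 [Hd1 HI']].
  destruct (HJ e He) as [d2 [Hd2 HJ']].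
  exists (Rmin d1 d2); split; [apply Rmin_pos; assumption |].
  intros n x t Ha Hb Hx Ht.
  pose proof (Rmin_l d1 d2); pose proof (Rmin_r d1 d2).
  assert (A : Rabs (rs_sum F1 g1 x t n - I) < e)
    by (apply HI'; auto; intros i Hi; destruct (Hx i Hi); split; lra).
  assert (B : Rabs (rs_sum F2 g2 x t n - J) < e)
    by (apply HJ'; auto; intros i Hi; destruct (Hx i Hi); split; lra).
  rewrite Hsum.
  replace (p * rs_sum F1 g1 x t n + q * rs_sum F2 g2 x t n - (p * I + q * J))
    with (p * (rs_sum F1 g1 x t n - I) + q * (rs_sum F2 g2 x t n - J)) by ring.
  replace eps with ((Rabs p + Rabs q + 1) * e) by (unfold e; field; lra).
  apply Rabs_lin_comb_lt; assumption.
Qed.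

Lemma RS_integral_linear_integrand (F g h k : R -> R) (a b I J p q : R) :
  (forall y, k y = p * g y + q * h y) ->
  RS_integral F g a b I -> RS_integral F h a b J ->
  RS_integral F k a b (p * I + q * J).
Proof.
  intros Hk; apply RS_integral_combine; intros; apply rs_sum_linear_integrand, Hk.
Qed.

Lemma RS_integral_linear_cdf (F1 F2 g : R -> R) (a b I J p q : R) :
  RS_integral F1 g a b I -> RS_integral F2 g a b J ->
  RS_integral (fun y => p * F1 y + q * F2 y) g a b (p * I + q * J).
Proof. apply RS_integral_combine; intros; apply rs_sum_linear_cdf. Qed.

Lemma RS_integral_const (F : R -> R) (c a b : R) :
  RS_integral F (fun _ => c) a b (c * (F b - F a)).
Proof.
  intros eps Heps; exists 1; split; [lra |].
  intros n x t Ha Hb _ _.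
  rewrite rs_sum_const, Ha, Hb, Rminus_diag, Rabs_R0; exact Heps.
Qed.

Lemma partition_fine_exists (a b d : R) :
  a < b -> 0 < d ->
  exists n x, partition a b n x /\ forall i, (i < n)%nat -> x (S i) - x i < d.
Proof.
  intros Hab Hd.
  destruct (archimed_cor1 (d / (b - a))) as [N [HN HN0]];
    [apply Rdiv_lt_0_compat; lra |].
  assert (HNpos : 0 < INR N) by (apply lt_0_INR; exact HN0).
  assert (Hstep : 0 < (b - a) / INR N) by (apply Rdiv_lt_0_compat; lra).
  assert (Hstep_d : (b - a) / INR N < d).
  { apply (Rmult_lt_compat_l (b - a)) in HN; [| lra].
    replace ((b - a) * (d / (b - a))) with d in HN by (field; lra).
    exact HN. }
  exists N, (fun i => a + INR i * ((b - a) / INR N)).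
  repeat split.
  - cbn; ring.
  - field; lra.
  - intros i _; rewrite S_INR; lra.
  - intros i _; rewrite S_INR; lra.
Qed.

Lemma RS_integral_left_sum (F g : R -> R) (a b I eps : R) :
  a < b -> RS_integral F g a b I -> 0 < eps ->
  exists n x, partition a b n x /\ Rabs (rs_sum F g x x n - I) < eps.
Proof.
  intros Hab HI Heps.
  destruct (HI eps Heps) as [d [Hd HI']].
  destruct (partition_fine_exists a b d Hab Hd) as [n [x [[Ha [Hb Hx]] Hmesh]]].
  exists n, x; split; [repeat split; assumption |].
  apply HI'; auto.
  intros i Hi; specialize (Hx i Hi); lra.
Qed.

Lemma RS_integral_le (F g : R -> R) (a b I c : R) :
  a < b -> RS_integral F g a b I ->
  (forall n x, partition a b n x -> rs_sum F g x x n <= c) -> I <= c.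
Proof.
  intros Hab HI Hc.
  destruct (Rle_or_lt I c) as [Hle | Hlt]; [exact Hle | exfalso].
  destruct (RS_integral_left_sum F g a b I (I - c) Hab HI) as [n [x [Hx Happrox]]];
    [lra |].
  specialize (Hc n x Hx); apply Rabs_def2 in Happrox; lra.
Qed.

Lemma RS_integral_ge (F g : R -> R) (a b I c : R) :
  a < b -> RS_integral F g a b I ->
  (forall n x, partition a b n x -> c <= rs_sum F g x x n) -> c <= I.
Proof.
  intros Hab HI Hc.
  destruct (Rle_or_lt c I) as [Hle | Hlt]; [exact Hle | exfalso].
  destruct (RS_integral_left_sum F g a b I (c - I) Hab HI) as [n [x [Hx Happrox]]];
    [lra |].
  specialize (Hc n x Hx); apply Rabs_def2 in Happrox; lra.
Qed.

Lemma RS_integral_nonneg (F g : R -> R) (a b I : R) :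
  a < b -> nondecreasing F -> (forall y, 0 <= g y) ->
  RS_integral F g a b I -> 0 <= I.
Proof.
  intros Hab HF Hg HI; apply (RS_integral_ge F g a b); auto.
  intros n x [_ [_ Hx]]; apply rs_sum_nonneg; auto.
  intros i Hi; split; [left; apply Hx |]; auto.
Qed.

Lemma mu1_le_prob_pos (F : R -> R) (m1 : R) :
  cdf_pm1 F -> mu1_is F m1 -> m1 <= 1 - prob_le F 0.
Proof.
  intros [HF [_ [Hone _]]] Hm1; unfold prob_le.
  apply (RS_integral_le F (fun y => y) (-2) 1); [lra | exact Hm1 |].
  intros n x [Ha [Hb Hx]].
  eapply Rle_trans; [apply rs_sum_id_left_le; auto; lra |].
  rewrite Ha, Hb, (Rmax_right 0 1), (Rmax_left 0 (-2)), (Hone 1) by lra.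
  lra.
Qed.

Lemma mu1_sq_le_mu2 (F : R -> R) (m1 m2 : R) :
  cdf_pm1 F -> mu1_is F m1 -> mu2_is F m2 -> m1 ^ 2 <= m2.
Proof.
  intros [HF [Hzero [Hone _]]] Hm1 Hm2.
  assert (Hlin : expect F (fun y => y ^ 2 - 2 * m1 * y) (1 * m2 + (- 2 * m1) * m1))
    by (apply (RS_integral_linear_integrand F (fun y => y ^ 2) (fun y => y));
        auto; intros; ring).
  assert (Hvar : expect F (fun y => (y - m1) ^ 2)
                   (1 * (1 * m2 + (- 2 * m1) * m1) + m1 ^ 2 * (1 * (F 1 - F (-2)))))
    by (apply (RS_integral_linear_integrand F (fun y => y ^ 2 - 2 * m1 * y) (fun _ => 1));
        [intros; ring | exact Hlin | apply RS_integral_const]).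
  apply RS_integral_nonneg in Hvar; [| lra | exact HF | intros; apply pow2_ge_0].
  rewrite (Hone 1), (Hzero (-2)) in Hvar by lra.
  lra.
Qed.

Definition step (s y : R) : R := if Rlt_dec y s then 0 else 1.

Lemma step_lt (s y : R) : y < s -> step s y = 0.
Proof. intros H; unfold step; destruct (Rlt_dec y s); lra. Qed.

Lemma step_ge (s y : R) : s <= y -> step s y = 1.
Proof. intros H; unfold step; destruct (Rlt_dec y s); lra. Qed.

Lemma cdf_pm1_step (s : R) : -1 <= s <= 1 -> cdf_pm1 (step s).
Proof.
  intros Hs; repeat split.
  - intros x y Hxy; unfold step.
    destruct (Rlt_dec x s), (Rlt_dec y s); lra.
  - intros x Hx; apply step_lt; lra.
  - intros x Hx; apply step_ge; lra.
  - intros x eps Heps.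
    destruct (Rlt_or_le x s) as [Hx | Hx].
    + exists (s - x); split; [lra |].
      intros y Hy; rewrite !step_lt by lra; lra.
    + exists 1; split; [lra |].
      intros y Hy; rewrite !step_ge by lra; lra.
Qed.

Lemma cdf_pm1_mix (F1 F2 : R -> R) (p : R) :
  0 <= p <= 1 -> cdf_pm1 F1 -> cdf_pm1 F2 ->
  cdf_pm1 (fun y => p * F1 y + (1 - p) * F2 y).
Proof.
  intros Hp [Mono1 [Zero1 [One1 Right1]]] [Mono2 [Zero2 [One2 Right2]]].
  repeat split.
  - intros x y Hxy.
    apply Rplus_le_compat; apply Rmult_le_compat_l; auto; lra.
  - intros x Hx; rewrite Zero1, Zero2 by exact Hx; ring.
  - intros x Hx; rewrite One1, One2 by exact Hx; ring.
  - intros x eps Heps.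
    assert (Heps2 : 0 < eps / 2) by lra.
    destruct (Right1 x (eps / 2) Heps2) as [d1 [Hd1 R1]].
    destruct (Right2 x (eps / 2) Heps2) as [d2 [Hd2 R2]].
    exists (Rmin d1 d2); split; [apply Rmin_pos; assumption |].
    intros y Hy; pose proof (Rmin_l d1 d2); pose proof (Rmin_r d1 d2).
    assert (F1 y - F1 x < eps / 2) by (apply R1; lra).
    assert (F2 y - F2 x < eps / 2) by (apply R2; lra).
    assert (0 <= p * (eps / 2 - (F1 y - F1 x))) by (apply Rmult_le_pos; lra).
    assert (0 <= (1 - p) * (eps / 2 - (F2 y - F2 x))) by (apply Rmult_le_pos; lra).
    lra.
Qed.

Lemma continuity_pt_ball (g : R -> R) (s : R) :
  continuity_pt g s ->
  forall eps, 0 < eps -> exists d, 0 < d /\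
    forall u, Rabs (u - s) < d -> Rabs (g u - g s) < eps.
Proof.
  intros Hg eps Heps.
  destruct (Hg eps Heps) as [d [Hd Hball]].
  exists d; split; [exact Hd |].
  intros u Hu.
  destruct (Req_dec u s) as [-> | Hus].
  - rewrite Rminus_diag, Rabs_R0; exact Heps.
  - apply (Hball u); split; [split; [exact I | auto] | exact Hu].
Qed.

(* Only the cell [x i, x (S i)] with x i < s <= x (S i) contributes, namely g (t i),
   and its tag is within the mesh of s. *)
Lemma rs_sum_step_close (s eps d : R) (g : R -> R) n x t :
  x O < s <= x n ->
  (forall u, Rabs (u - s) < d -> Rabs (g u - g s) < eps) ->
  (forall i, (i < n)%nat -> x i < x (S i) /\ x (S i) - x i < d) ->
  (forall i, (i < n)%nat -> x i <= t i <= x (S i)) ->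
  Rabs (rs_sum (step s) g x t n - g s) < eps.
Proof.
  intros Hs Hg Hx Ht.
  assert (Inv : forall k, (k <= n)%nat ->
    (x k < s -> rs_sum (step s) g x t k = 0) /\
    (s <= x k -> Rabs (rs_sum (step s) g x t k - g s) < eps)).
  { induction k as [|k IH]; intros Hk; cbn [rs_sum]; [split; intros; lra |].
    destruct (IH ltac:(lia)) as [Before After].
    destruct (Hx k ltac:(lia)) as [Hxk Hmesh].
    destruct (Ht k ltac:(lia)) as [Htk1 Htk2].
    destruct (Rlt_or_le (x (S k)) s) as [HSk | HSk].
    - rewrite Before, !step_lt by lra; split; intros; lra.
    - split; [intros; lra | intros _].
      rewrite (step_ge s (x (S k))) by exact HSk.
      destruct (Rlt_or_le (x k) s) as [Hk' | Hk'].
      + rewrite Before, step_lt by exact Hk'.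
        replace (0 + g (t k) * (1 - 0) - g s) with (g (t k) - g s) by ring.
        apply Hg, Rabs_def1; lra.
      + rewrite step_ge by exact Hk'.
        replace (rs_sum (step s) g x t k + g (t k) * (1 - 1) - g s)
          with (rs_sum (step s) g x t k - g s) by ring.
        apply After, Hk'. }
  apply (Inv n (le_n n)); lra.
Qed.

Lemma RS_integral_step (g : R -> R) (s a b : R) :
  a < s <= b -> continuity_pt g s -> RS_integral (step s) g a b (g s).
Proof.
  intros Hs Hg eps Heps.
  destruct (continuity_pt_ball g s Hg eps Heps) as [d [Hd Hball]].
  exists d; split; [exact Hd |].
  intros n x t Ha Hb Hx Ht.
  apply (rs_sum_step_close s eps d); auto; lra.
Qed.

Definition two_point (p s1 s2 : R) (y : R) : R := p * step s1 y + (1 - p) * step s2 y.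

Lemma expect_two_point (g : R -> R) (p s1 s2 : R) :
  -2 < s1 <= 1 -> -2 < s2 <= 1 -> continuity_pt g s1 -> continuity_pt g s2 ->
  expect (two_point p s1 s2) g (p * g s1 + (1 - p) * g s2).
Proof.
  intros Hs1 Hs2 Hg1 Hg2.
  apply RS_integral_linear_cdf; apply RS_integral_step; auto.
Qed.

Lemma continuity_pt_pow (n : nat) (s : R) : continuity_pt (fun y => y ^ n) s.
Proof. apply derivable_continuous_pt, derivable_pt_pow. Qed.

Lemma two_point_moments (m1 m2 : R) :
  0 < m1 -> m1 ^ 2 <= m2 <= m1 ->
  cdf_pm1 (two_point (Ccoef m1 m2) 0 (m2 / m1)) /\
  mu1_is (two_point (Ccoef m1 m2) 0 (m2 / m1)) m1 /\
  mu2_is (two_point (Ccoef m1 m2) 0 (m2 / m1)) m2 /\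
  prob_le (two_point (Ccoef m1 m2) 0 (m2 / m1)) 0 = Ccoef m1 m2.
Proof.
  intros Hm1 [Hjensen Hle].
  assert (Hm2 : 0 < m2) by nra.
  set (p := Ccoef m1 m2); set (c := m2 / m1).
  assert (Hp : 0 <= p <= 1).
  { assert (m1 ^ 2 / m2 * m2 = m1 ^ 2) by (field; lra).
    assert (0 < m1 ^ 2 / m2) by (apply Rdiv_lt_0_compat; nra).
    unfold p, Ccoef; nra. }
  assert (Hc : 0 < c <= 1).
  { assert (c * m1 = m2) by (unfold c; field; lra). split; nra. }
  split; [apply cdf_pm1_mix; auto; apply cdf_pm1_step; lra |].
  split.
  { replace m1 with (p * 0 + (1 - p) * c) by (unfold p, c, Ccoef; field; lra).
    apply (expect_two_point (fun y => y)); try lra;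
      apply derivable_continuous_pt, derivable_pt_id. }
  split.
  { replace m2 with (p * 0 ^ 2 + (1 - p) * c ^ 2) by (unfold p, c, Ccoef; field; lra).
    apply expect_two_point; try lra; apply continuity_pt_pow. }
  unfold prob_le, two_point.
  rewrite step_ge, step_lt by lra.
  ring.
Qed.

Theorem mainTheorem4 (F : R -> R) (m1 m2 : R) :
  cdf_pm1 F -> mu1_is F m1 -> mu2_is F m2 -> 0 < m1 ->
  ((exists G : R -> R, exists g1 g2 : R,
      cdf_pm1 G /\ mu1_is G g1 /\ mu2_is G g2 /\
      g1 = m1 /\ g2 = m2 /\ 0 < g2 /\ 0 < m2 /\
      Ccoef g1 g2 = Ccoef m1 m2 /\ Ccoef m1 m2 = prob_le G 0)
   <-> (0 < m2 /\ m2 <= m1)).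
Proof.
  intros HF Hm1 Hm2 Hpos; split.
  - intros [G [g1 [g2 [HG [G1 [_ [-> [-> [Hm2pos [_ [_ HC]]]]]]]]]]].
    split; [exact Hm2pos |].
    pose proof (mu1_le_prob_pos G m1 HG G1) as Hmean.
    rewrite <- HC in Hmean; unfold Ccoef in Hmean.
    assert (m1 ^ 2 / m2 * m2 = m1 ^ 2) by (field; lra).
    nra.
  - intros [Hm2pos Hle].
    pose proof (mu1_sq_le_mu2 F m1 m2 HF Hm1 Hm2) as Hjensen.
    destruct (two_point_moments m1 m2 Hpos (conj Hjensen Hle)) as [HG [G1 [G2 HC]]].
    exists (two_point (Ccoef m1 m2) 0 (m2 / m1)), m1, m2.
    do 3 (split; [assumption |]).
    repeat split; auto.
Qed.
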